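(* Fix parameters $\tau\in(0,1/100)$ and $M\ge2$, and let $\theta=2+\tau$. Let $G$ be a non-trivial and structured GCD graph with set of primes $\mathcal{P}$ such that \[ \mathcal{R}(G)\subseteq\{p> C_6\} \quad\text{and}\quad \mathcal{R}_-(G)\neq\emptyset. \] Then there is a numerator-exact GCD subgraph $G'$ of $G$ with multiplicative data $(\mathcal{P}',f',g')$ such that: (a) $G'$ is non-trivial and maximal; (b) $\mathcal{P}\subsetneq\mathcal{P}'\subseteq \mathcal{P}\cup \mathcal{R}_-(G)$, $\mathcal{R}_-(G')\subsetneq \mathcal{R}_-(G)$, and $\mathcal{R}_+(G')\subseteq \mathcal{R}_+(G)$; (c) $f'(p)\le 0$ and $g'(p)\le 0$ for all $p\in\mathcal{P}'\setminus\mathcal{P}$; (d) $q(G')\geqslant q(G)\prod_{p\in\mathcal{P}'\setminus\mathcal{P}} (1-\mathbbm{1}_{f'(p)=g'(p)<0}/p)^2 (1-1/p^{1+\frac{\tau}{4}})$.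
   Context: For a prime $p$, $k\in\mathbb{Z}$ and $\rho\in\mathbb{Q}_{>0}$, write $\operatorname{e}_p(\rho)=k$ if $\rho=p^ka/q$ with $a,q\in\mathbb{N}$, $p\nmid aq$. For real $t$, $t^+=\max\{t,0\}$, $t^-=\max\{-t,0\}$. Weighted bipartite graph: $(\mu,\mathcal{V},\mathcal{W},\mathcal{E})$ with $\mu:\mathbb{R}_{>0}\to\mathbb{R}_{>0}$, $\mathcal{V},\mathcal{W}$ finite sets of positive reals, $\mathcal{E}\subseteq\mathcal{V}\times\mathcal{W}$; $\mu(\mathcal{T})=\sum_{t\in\mathcal{T}}\mu(t)$, $\mu(\mathcal{E})=\sum_{(v,w)\in\mathcal{E}}\mu(v)\mu(w)$; edge density $\delta=\mu(\mathcal{E})/(\mu(\mathcal{V})\mu(\mathcal{W}))$ if $\mathcal{E}\neq\emptyset$, else $0$; $\mu^{(\theta)}=\delta^\theta\mu(\mathcal{V})\mu(\mathcal{W})$. A subgraph has $\mathcal{V}'\subseteq\mathcal{V}$, $\mathcal{W}'\subseteq\mathcal{W}$, $\mathcal{E}'\subseteq\mathcal{E}\cap(\mathcal{V}'\times\mathcal{W}')$, same $\mu$. ''Maximal'' means $\mu^{(\theta)}(G)\ge\mu^{(\theta)}(G')$ for every subgraph $G'$ (with $\theta=2+\tau$). GCD graph: a septuple $G=(\mu,\mathcal{V},\mathcal{W},\mathcal{E},\mathcal{P},f,g)$ where $(\mu,\mathcal{V},\mathcal{W},\mathcal{E})$ is a weighted bipartite graph with $\mathcal{V},\mathcal{W}\subset\mathbb{Q}_{>0}$,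 $\mathcal{P}$ is a set of primes (its ''set of primes''; $(\mathcal{P},f,g)$ is its ''multiplicative data''), $f,g:\mathcal{P}\to\mathbb{Z}$, and for all $p\in\mathcal{P}$ and all $(a/q,b/r)\in\mathcal{V}\times\mathcal{W}$ with $\gcd(a,q)=\gcd(b,r)=1$: $p^{f^+(p)}\mid a$, $p^{g^+(p)}\mid b$, $p^{f^-(p)}\mid q$, $p^{g^-(p)}\mid r$, and if $(a/q,b/r)\in\mathcal{E}$ then the exact power of $p$ dividing $\gcd(a,b)$ is $p^{\min\{f^+(p),g^+(p)\}}$ and that dividing $\gcd(q,r)$ is $p^{\min\{f^-(p),g^-(p)\}}$. $G$ is non-trivial if $\mathcal{E}\neq\emptyset$. Quality: $q(G)=\mu^{(\theta)}(G)\prod_{p\in\mathcal{P}}p^{|f(p)-g(p)|}$. A GCD subgraph $G'=(\mu,\mathcal{V}',\mathcal{W}',\mathcal{E}',\mathcal{P}',f',g')$ of $G$ has $\mathcal{V}'\subseteq\mathcal{V}$, $\mathcal{W}'\subseteq\mathcal{W}$, $\mathcal{E}'\subseteq\mathcal{E}$, $\mathcal{P}'\supseteq\mathcal{P}$, $f'|_{\mathcal{P}}=f$, $g'|_{\mathcal{P}}=g$. It is numerator-exact if for every $p\in\mathcal{P}'\setminus\mathcal{P}$ and every $(a/q,b/r)\in\mathcal{V}'\times\mathcal{W}'$ with $\gcd(a,q)=\gcd(b,r)=1$, $p^{f'^+(p)}$ exactly divides $a$ and $p^{g'^+(p)}$ exactly divides $b$. $\mathcal{R}(G)$ is the set of primes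 $p\notin\mathcal{P}$ for which there is $(a/q,b/r)\in\mathcal{E}$ with $\gcd(a,q)=\gcd(b,r)=1$ and $p\mid\gcd(a,b)\gcd(q,r)$. $G$ is structured if for each $p\in\mathcal{R}(G)$ there is $k_p\in\mathbb{Z}$ with $(\operatorname{e}_p(v)-k_p,\operatorname{e}_p(w)-k_p)\in\{(-1,0),(0,-1),(0,0),(0,1),(1,0)\}$ for all $(v,w)\in\mathcal{E}$. For structured $G$, $\mathcal{R}_+(G)$ is the set of $p\in\mathcal{R}(G)$ with $\operatorname{e}_p(v)\ge0$ and $\operatorname{e}_p(w)\ge0$ for all $(v,w)\in\mathcal{E}$, and $\mathcal{R}_-(G)$ is the set of $p\in\mathcal{R}(G)$ with $\operatorname{e}_p(v)\le0$ and $\operatorname{e}_p(w)\le0$ for all $(v,w)\in\mathcal{E}$. Constants: $C_1=10^4/\tau$, $C_2=10MC_1^3$, $C_4=10^{10}M^2C_2^2$, $C_6=\max\{C_4,10^4MC_2,C_2^{10/\tau}\}$. *)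

From HB Require Import structures.
From mathcomp Require Import all_boot all_order all_algebra finmap.
From mathcomp Require Import reals exp.
Set Implicit Arguments. Unset Strict Implicit. Unset Printing Implicit Defensive.
Import Order.TTheory GRing.Theory Num.Theory.
Local Open Scope ring_scope.
Local Open Scope fset_scope.

Definition rnum (v : rat) : nat := `|numq v|%N.
Definition rden (v : rat) : nat := `|denq v|%N.

Definition ipos (z : int) : nat := match z with Posz n => n | Negz _ => 0%N end.
Definition ineg (z : int) : nat := match z with Posz _ => 0%N | Negz n => n.+1 end.

Definition ep (p : nat) (v : rat) : int := (logn p (rnum v))%:Z - (logn p (rden v))%:Z.

(* A GCD graph (mu, V, W, E, P, f, g); the axioms are in [is_gcd_graph]. *)
Record GCDGraph (R : realType) := mkGCDGraph {
  gmu : R -> R;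
  gV : {fset rat};
  gW : {fset rat};
  gE : {fset rat * rat};
  gP : {fset nat};
  gf : nat -> int;
  gg : nat -> int }.

Section Defs.
Variable R : realType.

Definition is_wbg (mu : R -> R) (V W : {fset rat}) (E : {fset rat * rat}) : Prop :=
  (forall x : R, 0 < x -> 0 < mu x) /\
  (forall v, v \in V -> 0 < v) /\ (forall w, w \in W -> 0 < w) /\
  (forall e, e \in E -> (e.1 \in V) && (e.2 \in W)).

Definition muS (mu : R -> R) (S : {fset rat}) : R := \sum_(v <- S) mu (ratr v).
Definition muE (mu : R -> R) (E : {fset rat * rat}) : R :=
  \sum_(e <- E) mu (ratr e.1) * mu (ratr e.2).
Definition density (mu : R -> R) (V W : {fset rat}) (E : {fset rat * rat}) : R :=
  if E == fset0 then 0 else muE mu E / (muS mu V * muS mu W).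
Definition mu_theta (theta : R) (mu : R -> R) (V W : {fset rat})
    (E : {fset rat * rat}) : R :=
  powR (density mu V W E) theta * muS mu V * muS mu W.

Definition is_gcd_graph (G : GCDGraph R) : Prop :=
  is_wbg (gmu G) (gV G) (gW G) (gE G) /\
  (forall p, p \in gP G -> prime p) /\
  (forall p, p \in gP G ->
     (forall v, v \in gV G ->
        (p ^ ipos (gf G p) %| rnum v)%N /\ (p ^ ineg (gf G p) %| rden v)%N) /\
     (forall w, w \in gW G ->
        (p ^ ipos (gg G p) %| rnum w)%N /\ (p ^ ineg (gg G p) %| rden w)%N) /\
     (forall e, e \in gE G ->
        logn p (gcdn (rnum e.1) (rnum e.2)) = minn (ipos (gf G p)) (ipos (gg G p)) /\
        logn p (gcdn (rden e.1) (rden e.2)) = minn (ineg (gf G p)) (ineg (gg G p)))).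

Definition nontrivial (G : GCDGraph R) : Prop := gE G != fset0.

Definition gmu_theta (theta : R) (G : GCDGraph R) : R :=
  mu_theta theta (gmu G) (gV G) (gW G) (gE G).

Definition quality (theta : R) (G : GCDGraph R) : R :=
  gmu_theta theta G * \prod_(p <- gP G) (p%:R ^+ `|gf G p - gg G p|%N).

Definition maximal (theta : R) (G : GCDGraph R) : Prop :=
  forall (V' W' : {fset rat}) (E' : {fset rat * rat}),
    V' `<=` gV G -> W' `<=` gW G ->
    (forall e, e \in E' -> [&& e \in gE G, e.1 \in V' & e.2 \in W']) ->
    mu_theta theta (gmu G) V' W' E' <= gmu_theta theta G.

Definition gcd_subgraph (G' G : GCDGraph R) : Prop :=
  gmu G' = gmu G /\ gV G' `<=` gV G /\ gW G' `<=` gW G /\ gE G' `<=` gE G /\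
  gP G `<=` gP G' /\
  (forall p, p \in gP G -> gf G' p = gf G p /\ gg G' p = gg G p).

Definition numerator_exact (G' G : GCDGraph R) : Prop :=
  forall p, p \in gP G' -> p \notin gP G ->
    (forall v, v \in gV G' -> logn p (rnum v) = ipos (gf G' p)) /\
    (forall w, w \in gW G' -> logn p (rnum w) = ipos (gg G' p)).

Definition inR (G : GCDGraph R) (p : nat) : Prop :=
  prime p /\ p \notin gP G /\
  exists e, e \in gE G /\
    (p %| gcdn (rnum e.1) (rnum e.2) * gcdn (rden e.1) (rden e.2))%N.

Definition structured (G : GCDGraph R) : Prop :=
  forall p, inR G p -> exists k : int, forall e, e \in gE G ->
    (ep p e.1 - k, ep p e.2 - k) \in
      [:: (-1, 0); (0, -1); (0, 0); (0, 1); (1, 0)]%R.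

Definition inRplus (G : GCDGraph R) (p : nat) : Prop :=
  inR G p /\ forall e, e \in gE G -> 0 <= ep p e.1 /\ 0 <= ep p e.2.

Definition inRminus (G : GCDGraph R) (p : nat) : Prop :=
  inR G p /\ forall e, e \in gE G -> ep p e.1 <= 0 /\ ep p e.2 <= 0.

Definition C1 (tau : R) : R := 10 ^+ 4 / tau.
Definition C2 (tau M : R) : R := 10 * M * C1 tau ^+ 3.
Definition C4 (tau M : R) : R := 10 ^+ 10 * M ^+ 2 * C2 tau M ^+ 2.
Definition C6 (tau M : R) : R :=
  Num.max (C4 tau M) (Num.max (10 ^+ 4 * M * C2 tau M) (powR (C2 tau M) (10 / tau))).

End Defs.

From HB Require Import structures.
From mathcomp Require Import all_boot all_order all_algebra finmap.
From mathcomp Require Import reals exp.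
From mathcomp Require Import ring lra zify.
Import Order.TTheory GRing.Theory Num.Theory.
Local Open Scope fset_scope.
Local Open Scope ring_scope.

(* Let p be a prime of R_-(G) and k the exponent at which G is structured at
   p: then k <= -1, and on every edge (v, w) both e_p(v) and e_p(w) lie in
   {k - 1, k, k + 1}, one of them being k.  The edges therefore fall into three
   classes, according as e_p(v), e_p(w) <= k, e_p(v) = k + 1 or e_p(w) = k + 1,
   and each class spans a GCD subgraph in which p is adjoined to the primes
   with exponents (k, k), (k + 1, k) or (k, k + 1) respectively.
   A subgraph carrying a fraction x of the edge weight and a fraction r of the
   product of the vertex weights satisfies mu^(theta) >= c mu^(theta)(G) as
   soon as x >= c^s r^(1 - s), with s = 1/theta.  For the losses c claimed in
   (d), namely (1 - 1/p)^2 (1 - q) for the first class and (1 - q)/p for the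
   other two (where the quality also gains the factor p^|f - g| = p), with
   q = p^(-1 - tau/4), weighted AM-GM shows that the three thresholds sum to at
   most 1, because 288/p^2 <= q once p > C6.  The three edge fractions sum to
   1, so some class meets its threshold; a maximal subgraph of that class is
   the required G'. *)

Section PowerInequalities.
Context {R : realType}.
Implicit Types r s t u v x y q : R.

Lemma powR_AMGM [r x y] : 0 < r < 1 -> 0 <= x -> 0 <= y ->
  x `^ r * y `^ (1 - r) <= r * x + (1 - r) * y.
Proof.
move=> /andP[r0 r1] x0 y0; have r'0 : 0 < 1 - r by rewrite subr_gt0.
have := @conjugate_powR R (x `^ r) (y `^ (1 - r)) r^-1 (1 - r)^-1
  (powR_ge0 _ _) (powR_ge0 _ _).
rewrite !invr_gt0 r0 r'0 !invrK -!powRrM !divff ?gt_eqF // !powRr1 //.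
by rewrite (mulrC r) (mulrC (1 - r)); apply => //; rewrite addrC subrK.
Qed.

Lemma powR_le_tangent [r x] : 0 < r < 1 -> 0 <= x -> x `^ r <= r * x + (1 - r).
Proof. by move=> r01 x0; have := powR_AMGM r01 x0 ler01; rewrite powR1 !mulr1. Qed.

Lemma powR_le1 [r x] : 0 <= x <= 1 -> 0 <= r -> x `^ r <= 1.
Proof.
move=> /andP[x0 x1] r0; have := @ge0_ler_powR R r r0 x 1.
by rewrite powR1; apply; rewrite ?nnegrE.
Qed.

Lemma powR_double r x : 0 <= x -> x `^ (2 * r) = (x `^ r) ^+ 2.
Proof. by move=> x0; rewrite mulrC powRrM -powR_mulrn ?powR_ge0. Qed.

Lemma split_mass_bound_small [s t u] :
  3^-1 < s -> s < 2^-1 -> 0 <= t <= 2^-1 -> 0 <= u <= 1 ->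
  u <= 8 * t ->
  (1 - t) `^ (2 * s) * (1 - u) `^ (2 * (1 - s)) + 2 * (t `^ s * u `^ (1 - s))
    <= 1 + 96 * t ^+ 2.
Proof.
move=> s_gt s_lt /andP[t_ge0 t_le] /andP[u_ge0 u_le1] ut.
have s01 : 0 < s < 1 by apply/andP; split; lra.
have [t'0 u'0] : 0 <= 1 - t /\ 0 <= 1 - u by split; lra.
have Tt : (1 - t) `^ (2 * s) <= 1 - 2 * s * t.
  have s2 : 0 < 2 * s < 1 by apply/andP; split; lra.
  by apply: le_trans (powR_le_tangent s2 t'0) _; nra.
have Tu : (1 - u) `^ (1 - 2 * s) <= 1 - (1 - 2 * s) * u.
  have s2 : 0 < 1 - 2 * s < 1 by apply/andP; split; lra.
  by apply: le_trans (powR_le_tangent s2 u'0) _; nra.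
have Eu : (1 - u) `^ (2 * (1 - s)) = (1 - u) * (1 - u) `^ (1 - 2 * s).
  rewrite -{2}(@powRr1 _ (1 - u)) -?powRD; last lra.
    by congr (_ `^ _); lra.
  by apply/implyP => /eqP; lra.
have Mu : (1 - u) `^ (2 * (1 - s)) <= (1 - u) * (1 - (1 - 2 * s) * u).
  by rewrite Eu; apply: ler_wpM2l; lra.
have AG := powR_AMGM s01 t_ge0 u_ge0.
have XY := ler_pM (powR_ge0 _ _) (powR_ge0 _ _) Tt Mu.
apply: le_trans (lerD XY (ler_wpM2l _ AG)) _; first lra.
have -> : (1 - 2 * s * t) * ((1 - u) * (1 - (1 - 2 * s) * u)) +
    2 * (s * t + (1 - s) * u) = 1 + (1 - 2 * s) * u ^+ 2 +
    4 * s * (1 - s) * (t * u) - 2 * s * t * ((1 - 2 * s) * u ^+ 2) by ring.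
have u2 : u ^+ 2 <= 64 * t ^+ 2.
  have -> : 64 * t ^+ 2 = (8 * t) ^+ 2 by ring.
  by rewrite lerXn2r ?nnegrE //; lra.
have tu : t * u <= 8 * t ^+ 2.
  by rewrite expr2 mulrA [8 * t]mulrC -mulrA ler_wpM2l // mulrC.
have su : 4 * s * (1 - s) <= 1 by have := sqr_ge0 (2 * s - 1); nra.
have su' := ler_wpM2r (mulr_ge0 t_ge0 u_ge0) su.
have e1 : (1 - 2 * s) * u ^+ 2 <= u ^+ 2 by have := sqr_ge0 u; nra.
have e2 : 0 <= 2 * s * t * ((1 - 2 * s) * u ^+ 2).
  by rewrite !mulr_ge0 ?sqr_ge0 //; lra.
by have := sqr_ge0 t; lra.
Qed.

Lemma split_mass_bound_large [s t u] :
  3^-1 < s -> s < 2^-1 -> 0 <= t <= 2^-1 -> 0 <= u <= 1 ->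
  8 * t < u ->
  (1 - t) `^ (2 * s) * (1 - u) `^ (2 * (1 - s)) + 2 * (t `^ s * u `^ (1 - s))
    <= 1.
Proof.
move=> s_gt s_lt /andP[t_ge0 t_le] /andP[u_ge0 u_le1] ut; have u0 : 0 < u by lra.
have Tt : (1 - t) `^ (2 * s) <= 1 by apply: powR_le1; [apply/andP; split|]; lra.
have Mu : (1 - u) `^ (2 * (1 - s)) <= 1 - u.
  have [->|u1] := eqVneq u 1; first by rewrite subrr powR0 ?gt_eqF //; lra.
  apply: ge1r_powR; last lra.
  by rewrite subr_gt0 lt_neqAle u1 u_le1 /=; lra.
(* [8 ^ s >= 2] as [s > 1/3]; this absorbs the factor 2 *)
have E8 : 2 <= 8 `^ s.
  have -> : (8 : R) = 2 `^ 3%:R by rewrite powR_mulrn //; lra.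
  rewrite -powRrM; apply: le_trans (ler_powR _ (_ : 1 <= 3 * s)); last lra.
    by rewrite powRr1.
  lra.
have Ts : t `^ s * 8 `^ s <= u `^ s.
  by rewrite -powRM; [apply: ge0_ler_powR; rewrite ?nnegrE|..]; lra.
have Us : u `^ s * u `^ (1 - s) = u.
  rewrite -powRD; last by apply/implyP => _; rewrite gt_eqF.
  by rewrite addrC subrK powRr1 //; lra.
have Tu : 2 * (t `^ s * u `^ (1 - s)) <= u.
  rewrite -[X in _ <= X]Us; apply: le_trans _ (ler_wpM2r (powR_ge0 _ _) Ts).
  rewrite mulrAC [X in _ <= X]mulrC.
  by apply: ler_wpM2r; rewrite ?mulr_ge0 ?powR_ge0.
have := ler_pM (powR_ge0 _ _) (powR_ge0 _ _) Tt Mu; lra.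
Qed.

Lemma split_mass_bound [s t u] :
  3^-1 < s -> s < 2^-1 -> 0 <= t <= 2^-1 -> 0 <= u <= 1 ->
  (1 - t) `^ (2 * s) * (1 - u) `^ (2 * (1 - s)) + 2 * (t `^ s * u `^ (1 - s))
    <= 1 + 96 * t ^+ 2.
Proof.
move=> s_gt s_lt t01 u01; have [ut|ut] := lerP u (8 * t).
  exact: split_mass_bound_small.
by have := split_mass_bound_large s_gt s_lt t01 u01 ut; have := sqr_ge0 t; lra.
Qed.

Lemma absorb_quadratic_error [s t q] : 3^-1 < s -> s < 1 -> 0 <= q <= 1 ->
  288 * t ^+ 2 <= q -> (1 - q) `^ s * (1 + 96 * t ^+ 2) <= 1.
Proof.
move=> s_gt s_lt /andP[q0 q1] tq.
have s01 : 0 < s < 1 by apply/andP; split; lra.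
have q'0 : 0 <= 1 - q by lra.
have t2 : 0 <= 1 + 96 * t ^+ 2 by have := sqr_ge0 t; lra.
apply: le_trans (ler_wpM2r t2 (powR_le_tangent s01 q'0)) _.
have e1 : 0 <= (s - 3^-1) * q by apply: mulr_ge0; lra.
have e2 : 0 <= s * q * t ^+ 2.
  by apply: mulr_ge0; [apply: mulr_ge0|apply: sqr_ge0]; lra.
have -> : (s * (1 - q) + (1 - s)) * (1 + 96 * t ^+ 2) =
   1 + 96 * t ^+ 2 - s * q - 96 * (s * q * t ^+ 2) by ring.
lra.
Qed.

Lemma three_block_bound [s t q u v] : 3^-1 < s -> s < 2^-1 ->
  0 <= t <= 2^-1 -> 0 <= q <= 1 -> 288 * t ^+ 2 <= q -> 0 <= u <= 1 -> 0 <= v <= 1 ->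
  ((1 - t) ^+ 2 * (1 - q)) `^ s * ((1 - u) * (1 - v)) `^ (1 - s) +
  ((1 - q) * t) `^ s * (u `^ (1 - s) + v `^ (1 - s)) <= 1.
Proof.
move=> s_gt s_lt t01 q01 tq u01 v01.
have Hu := split_mass_bound s_gt s_lt t01 u01.
have Hv := split_mass_bound s_gt s_lt t01 v01.
have Hq : (1 - q) `^ s * (1 + 96 * t ^+ 2) <= 1.
  by apply: absorb_quadratic_error => //; lra.
move: t01 q01 u01 v01 => /andP[t0 t1] /andP[q0 q1] /andP[u0 u1] /andP[v0 v1].
have [t'0 q'0 u'0 v'0] : [/\ 0 <= 1 - t, 0 <= 1 - q, 0 <= 1 - u & 0 <= 1 - v].
  by split; lra.
rewrite !powR_double // in Hu Hv.
have -> : ((1 - t) ^+ 2 * (1 - q)) `^ s = ((1 - t) `^ s) ^+ 2 * (1 - q) `^ s.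
  by rewrite powRM ?sqr_ge0 // -[(1 - t) ^+ 2]powR_mulrn // -powRrM powR_double.
rewrite !powRM //.
set P := (1 - t) `^ s in Hu Hv *; set g := (1 - q) `^ s in Hq *.
set T := t `^ s in Hu Hv *; set X := u `^ (1 - s) in Hu *.
set Y := v `^ (1 - s) in Hv *; set U := (1 - u) `^ (1 - s) in Hu *.
set V := (1 - v) `^ (1 - s) in Hv *.
have g0 : 0 <= g := powR_ge0 _ _.
(* [U V <= (U^2 + V^2) / 2] decouples the contributions of [u] and [v] *)
have UV : U * V <= (U ^+ 2 + V ^+ 2) / 2.
  by have := sqr_ge0 (U - V); rewrite sqrrB; lra.
have := ler_wpM2l (mulr_ge0 g0 (sqr_ge0 P)) UV.
have -> : g * P ^+ 2 * ((U ^+ 2 + V ^+ 2) / 2) =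
  g * ((P ^+ 2 * U ^+ 2 + P ^+ 2 * V ^+ 2) / 2) by ring.
have : g * ((P ^+ 2 * U ^+ 2 + 2 * (T * X) + (P ^+ 2 * V ^+ 2 + 2 * (T * Y))) / 2)
    <= g * (1 + 96 * t ^+ 2) by apply: ler_wpM2l => //; lra.
lra.
Qed.

Lemma exists_part_above [x1 x2 x3 b1 b2 b3 : R] :
  0 <= x1 -> 0 <= x2 -> 0 <= x3 -> x1 + x2 + x3 = 1 ->
  0 <= b1 -> 0 <= b2 -> 0 <= b3 -> b1 + b2 + b3 <= 1 ->
  [\/ 0 < x1 /\ b1 <= x1, 0 < x2 /\ b2 <= x2 | 0 < x3 /\ b3 <= x3].
Proof.
move=> x10 x20 x30 xs b10 b20 b30 bs.
have below x b : ~~ ((0 < x) && (b <= x)) -> x <= 0 \/ x < b.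
  by rewrite negb_and -leNgt -ltNge => /orP.
case: (boolP ((0 < x1) && (b1 <= x1))) => [/andP[? ?]|/below h1]; first by constructor 1.
case: (boolP ((0 < x2) && (b2 <= x2))) => [/andP[? ?]|/below h2]; first by constructor 2.
case: (boolP ((0 < x3) && (b3 <= x3))) => [/andP[? ?]|/below h3]; first by constructor 3.
exfalso; lra.
Qed.

Lemma exists_dense_block [s t q aA aB aC bA bB bC xA xB xC : R] :
  3^-1 < s -> s < 2^-1 -> 0 <= t <= 2^-1 -> 0 <= q <= 1 -> 288 * t ^+ 2 <= q ->
  0 <= aA -> 0 <= aB -> 0 <= aC -> 0 <= bA -> 0 <= bB -> 0 <= bC ->
  aA + aB <= 1 -> aC <= 1 -> bA + bC <= 1 -> bB <= 1 ->
  0 <= xA -> 0 <= xB -> 0 <= xC -> xA + xB + xC = 1 ->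
  [\/ 0 < xA /\ ((1 - t) ^+ 2 * (1 - q)) `^ s * (aA * bA) `^ (1 - s) <= xA,
      0 < xB /\ ((1 - q) * t) `^ s * (aB * bB) `^ (1 - s) <= xB |
      0 < xC /\ ((1 - q) * t) `^ s * (aC * bC) `^ (1 - s) <= xC].
Proof.
move=> s_gt s_lt t01 q01 tq aA0 aB0 aC0 bA0 bB0 bC0 aAB aC1 bAC bB1 xA0 xB0 xC0 xs.
have aB01 : 0 <= aB <= 1 by apply/andP; split; lra.
have bC01 : 0 <= bC <= 1 by apply/andP; split; lra.
have F := three_block_bound s_gt s_lt t01 q01 tq aB01 bC01.
have mono r r' : 0 <= r -> r <= r' -> r `^ (1 - s) <= r' `^ (1 - s).
  move=> r0 rr'; apply: ge0_ler_powR; rewrite ?nnegrE //; first lra.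
  exact: le_trans rr'.
have rA : (aA * bA) `^ (1 - s) <= ((1 - aB) * (1 - bC)) `^ (1 - s).
  by apply: mono; [rewrite mulr_ge0|apply: ler_pM]; lra.
have rB : (aB * bB) `^ (1 - s) <= aB `^ (1 - s).
  by apply: mono; [rewrite mulr_ge0|rewrite ler_piMr]; lra.
have rC : (aC * bC) `^ (1 - s) <= bC `^ (1 - s).
  by apply: mono; [rewrite mulr_ge0|rewrite ler_piMl]; lra.
apply: exists_part_above; rewrite ?mulr_ge0 ?powR_ge0 //; apply: le_trans F.
have cA0 := powR_ge0 ((1 - t) ^+ 2 * (1 - q)) s.
have cB0 := powR_ge0 ((1 - q) * t) s.
have := ler_wpM2l cA0 rA; have := ler_wpM2l cB0 rB; have := ler_wpM2l cB0 rC.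
lra.
Qed.

Lemma powR_density_transfer [th c x r D S : R] :
  0 < th -> 0 <= c -> 0 < r -> 0 <= D -> 0 <= S ->
  c `^ th^-1 * r `^ (1 - th^-1) <= x ->
  c * (D `^ th * S) <= (x / r * D) `^ th * (r * S).
Proof.
move=> th0 c0 r0 D0 S0 hx.
have x0 : 0 <= x by apply: le_trans hx; rewrite mulr_ge0 ?powR_ge0.
(* raising [c^(1/th) r^(-1/th) <= x / r] to the power [th] gives
   [c <= (x / r)^th r] *)
have h1 : c `^ th^-1 * r `^ (- th^-1) <= x / r.
  have e : r `^ (1 - th^-1) = r `^ (- th^-1) * r.
    rewrite addrC powRD ?(powRr1 (ltW r0)) //.
    by apply/implyP => _; rewrite gt_eqF.
  by rewrite ler_pdivlMr // -mulrA -e.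
have h2 := ge0_ler_powR (ltW th0) (mulr_ge0 (powR_ge0 _ _) (powR_ge0 _ _))
  (divr_ge0 x0 (ltW r0)) h1.
rewrite powRM ?powR_ge0 // -!powRrM mulNr mulVf ?gt_eqF // powRr1 //
  (powR_inv1 (ltW r0)) in h2.
rewrite (powRM _ (divr_ge0 x0 (ltW r0)) D0).
have h3 : c <= (x / r) `^ th * r by rewrite -ler_pdivrMr.
have -> : (x / r) `^ th * D `^ th * (r * S) = (x / r) `^ th * r * (D `^ th * S).
  by ring.
by have := ler_wpM2r (mulr_ge0 (powR_ge0 D th) S0) h3.
Qed.

Lemma exists_dense_block_masses [s t q SV SW VA VB VC WA WB WC EA EB EC : R] :
  3^-1 < s -> s < 2^-1 -> 0 <= t <= 2^-1 -> 0 <= q <= 1 -> 288 * t ^+ 2 <= q ->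
  0 < SV -> 0 < SW -> 0 <= VA -> 0 <= VB -> 0 <= VC -> 0 <= WA -> 0 <= WB -> 0 <= WC ->
  VA + VB <= SV -> VC <= SV -> WA + WC <= SW -> WB <= SW ->
  0 <= EA -> 0 <= EB -> 0 <= EC -> 0 < EA + EB + EC ->
  let dense (k V W E : R) :=
    0 < E /\ k `^ s * (V / SV * (W / SW)) `^ (1 - s) <= E / (EA + EB + EC) in
  [\/ dense ((1 - t) ^+ 2 * (1 - q)) VA WA EA, dense ((1 - q) * t) VB WB EB |
      dense ((1 - q) * t) VC WC EC].
Proof.
move=> s_gt s_lt t01 q01 tq SV0 SW0 VA0 VB0 VC0 WA0 WB0 WC0 VAB VC1 WAC WB1
  EA0 EB0 EC0 ET0 dense.
set ET := EA + EB + EC in ET0 dense *.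
have le1 (x y S : R) : 0 < S -> x + y <= S -> x / S + y / S <= 1.
  by move=> S0 xyS; rewrite -mulrDl ler_pdivrMr // mul1r.
have le1' (x S : R) : 0 < S -> x <= S -> x / S <= 1.
  by move=> S0 xS; rewrite ler_pdivrMr // mul1r.
have gt0 (x : R) : 0 < x / ET -> 0 < x by rewrite pmulr_lgt0 // invr_gt0.
have xs : EA / ET + EB / ET + EC / ET = 1 by rewrite -!mulrDl divff ?gt_eqF.
have [SV0' SW0' ET0'] := And3 (ltW SV0) (ltW SW0) (ltW ET0).
have [] := @exists_dense_block s t q (VA / SV) (VB / SV) (VC / SV) (WA / SW)
  (WB / SW) (WC / SW) (EA / ET) (EB / ET) (EC / ET) s_gt s_lt t01 q01 tq
  _ _ _ _ _ _ _ _ _ _ _ _ _ xs; rewrite ?divr_ge0 ?le1 ?le1' // => -[/gt0 x0 hx].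
- by constructor 1.
- by constructor 2.
- by constructor 3.
Qed.

Lemma inv_powR_bounds [tau x] : 0 < tau -> tau < 1 -> 288 * 288 <= x ->
  288 * x^-1 ^+ 2 <= 1 / x `^ (1 + tau / 4) /\ 0 <= 1 / x `^ (1 + tau / 4) <= 1.
Proof.
move=> t0 t1 xb; have x0 : 0 < x by lra.
have X1 : 1 <= x `^ (1 + tau / 4).
  have x1 : 1 <= x by lra.
  by rewrite -[X in X <= _](powRr0 x) (ler_powR x1) //; lra.
have X0 : 0 < x `^ (1 + tau / 4) by lra.
split; last first.
  by rewrite divr_ge0 ?powR_ge0 //= ler_pdivrMr // mul1r.
(* [x^(1 + tau/4) <= x^2 / 288] since [x^(1 - tau/4) >= x^(1/2) >= 288] *)
have Y : 288 <= x `^ (1 - tau / 4).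
  apply: le_trans (_ : x `^ 2^-1 <= _); last by apply: ler_powR; lra.
  rewrite (powR12_sqrt (ltW x0)) -[X in X <= _]ger0_norm // -sqrtr_sqr ler_sqrt //.
  exact: ltW.
have XY : x `^ (1 + tau / 4) * x `^ (1 - tau / 4) = x ^+ 2.
  rewrite -powRD; last by apply/implyP => _; rewrite gt_eqF.
  by rewrite -powR_mulrn ?ltW //; congr (_ `^ _); lra.
have -> : 1 / x `^ (1 + tau / 4) = x `^ (1 - tau / 4) * (x ^+ 2)^-1.
  by rewrite -XY; field; rewrite !gt_eqF ?powR_gt0.
by rewrite exprVn ler_wpM2r // invr_ge0 exprn_ge0 // ltW.
Qed.

End PowerInequalities.

Lemma rden_gt0 v : (0 < rden v)%N.
Proof. by rewrite absz_gt0 gt_eqF ?denq_gt0. Qed.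

Lemma rnum_gt0 v : 0 < v -> (0 < rnum v)%N.
Proof. by move=> v0; rewrite absz_gt0 gt_eqF ?numq_gt0. Qed.

Lemma coprime_rnum_rden v : coprime (rnum v) (rden v).
Proof. exact: coprime_num_den. Qed.

Lemma logn_coprime_dvd [p m n : nat] : prime p -> coprime m n -> (p %| n)%N ->
  logn p m = 0%N.
Proof.
move=> pp cmn pn; apply: logn_coprime; rewrite prime_coprime //; apply/negP => pm.
have : (p %| gcdn m n)%N by rewrite dvdn_gcd pm pn.
by rewrite (eqP cmn) dvdn1 => /eqP p1; rewrite p1 in pp.
Qed.

Lemma ep_lt0 [p v] : prime p -> (p %| rden v)%N -> ep p v < 0.
Proof.
move=> pp pd; rewrite /ep (logn_coprime_dvd pp (coprime_rnum_rden v) pd).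
have : (0 < logn p (rden v))%N by rewrite logn_gt0 mem_primes pp rden_gt0.
lia.
Qed.

Lemma ep_gt0 [p v] : prime p -> 0 < v -> (p %| rnum v)%N -> 0 < ep p v.
Proof.
move=> pp v0 pn; have cop : coprime (rden v) (rnum v).
  by rewrite coprime_sym coprime_rnum_rden.
rewrite /ep (logn_coprime_dvd pp cop pn).
have : (0 < logn p (rnum v))%N by rewrite logn_gt0 mem_primes pp rnum_gt0.
lia.
Qed.

Lemma ep_le0E [p v] : prime p -> 0 < v -> ep p v <= 0 ->
  logn p (rnum v) = 0%N /\ (logn p (rden v))%:Z = - ep p v.
Proof.
move=> pp v0 e0; suff h : logn p (rnum v) = 0%N by split => //; rewrite /ep h; lia.
apply/eqP; rewrite -leqn0 leqNgt logn_gt0 mem_primes pp rnum_gt0 //=.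
by apply/negP => /(ep_gt0 pp v0); rewrite ltNge e0.
Qed.

Lemma structured_pair_bounds [a b k : int] :
  ((a - k)%R, (b - k)%R) \in [:: (-1, 0); (0, -1); (0, 0); (0, 1); (1, 0)]%R ->
  (a = k \/ b = k) /\ (k - 1 <= a <= k + 1)%R /\ (k - 1 <= b <= k + 1)%R.
Proof. by rewrite !inE !xpair_eqE; lia. Qed.

Lemma ipos_nonpos [z] : z <= 0 -> ipos z = 0%N.
Proof. by case: z => n //=; lia. Qed.

Lemma ineg_nonpos [z] : z <= 0 -> (ineg z)%:Z = - z.
Proof. by case: z => n /=; [lia | rewrite NegzE; lia]. Qed.

Lemma dvdn_pfactor_rnum_rden [p x] (f : int) : prime p -> 0 < x ->
  ep p x <= f -> f <= 0 ->
  (p ^ ipos f %| rnum x)%N /\ (p ^ ineg f %| rden x)%N.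
Proof.
move=> pp x0 xf f0; have [_ hden] := ep_le0E pp x0 (le_trans xf f0).
rewrite ipos_nonpos // dvd1n pfactor_dvdn ?rden_gt0 //; split => //.
by have := ineg_nonpos f0; lia.
Qed.

Section GCDGraphs.
Context {R : realType}.
Implicit Types G : GCDGraph R.

Lemma gcd_graph_V_gt0 [G v] : is_gcd_graph G -> v \in gV G -> 0 < v.
Proof. by case=> -[_ [posV _]] _; apply: posV. Qed.

Lemma gcd_graph_W_gt0 [G w] : is_gcd_graph G -> w \in gW G -> 0 < w.
Proof. by case=> -[_ [_ [posW _]]] _; apply: posW. Qed.

Lemma gcd_graph_edge [G e] : is_gcd_graph G -> e \in gE G ->
  (e.1 \in gV G) && (e.2 \in gW G).
Proof. by case=> -[_ [_ [_ hE]]] _; apply: hE. Qed.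

Lemma gcd_graph_edge_gt0 [G e] : is_gcd_graph G -> e \in gE G ->
  0 < e.1 /\ 0 < e.2.
Proof.
move=> gG /(gcd_graph_edge gG) /andP[e1 e2].
by split; [apply: gcd_graph_V_gt0 e1 | apply: gcd_graph_W_gt0 e2].
Qed.

Lemma gcd_edge_sign [G q e] : is_gcd_graph G -> prime q -> e \in gE G ->
  (q %| gcdn (rnum e.1) (rnum e.2) * gcdn (rden e.1) (rden e.2))%N ->
  (0 < ep q e.1 /\ 0 < ep q e.2) \/ (ep q e.1 < 0 /\ ep q e.2 < 0).
Proof.
move=> gG qp eE; have [e1 e2] := gcd_graph_edge_gt0 gG eE.
rewrite Euclid_dvdM // !dvdn_gcd => /orP[/andP[h1 h2]|/andP[h1 h2]].
- by left; split; apply: ep_gt0.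
- by right; split; apply: ep_lt0.
Qed.

Lemma structured_sign [G q] e0 e : structured G -> inR G q ->
  e0 \in gE G -> e \in gE G ->
  (ep q e0.1 < 0 -> ep q e0.2 < 0 -> ep q e.1 <= 0 /\ ep q e.2 <= 0) /\
  (0 < ep q e0.1 -> 0 < ep q e0.2 -> 0 <= ep q e.1 /\ 0 <= ep q e.2).
Proof.
move=> st hq e0E eE; have [k Hk] := st q hq.
have := structured_pair_bounds (Hk e0 e0E); have := structured_pair_bounds (Hk e eE).
lia.
Qed.

Lemma inR_subgraph [G G' q] : gcd_subgraph G' G -> inR G' q -> inR G q.
Proof.
move=> [_ [_ [_ [EE [PP _]]]]] [qp [qP [e [eE he]]]]; split => //; split.
  by apply: contra qP; apply: (fsubsetP PP).
by exists e; split => //; apply: (fsubsetP EE).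
Qed.

Lemma inRminus_subgraph [G G' q] : is_gcd_graph G -> structured G ->
  gcd_subgraph G' G -> inRminus G' q -> inRminus G q.
Proof.
move=> gG st sub [hR' hb]; have hR := inR_subgraph sub hR'.
split => // e eE; case: hR' => qp [_ [e0 [e0E hd]]].
have e0G : e0 \in gE G by case: sub => _ [_ [_ [/fsubsetP EE _]]]; apply: EE.
have [e0_1 e0_2] := hb e0 e0E.
case: (gcd_edge_sign gG qp e0G hd) => [[h1 _]|[h1 h2]]; first lia.
exact: (structured_sign e0 e st hR e0G eE).1.
Qed.

Lemma inRplus_subgraph [G G' q] : is_gcd_graph G -> structured G ->
  gcd_subgraph G' G -> inRplus G' q -> inRplus G q.
Proof.
move=> gG st sub [hR' hb]; have hR := inR_subgraph sub hR'.
split => // e eE; case: hR' => qp [_ [e0 [e0E hd]]].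
have e0G : e0 \in gE G by case: sub => _ [_ [_ [/fsubsetP EE _]]]; apply: EE.
have [e0_1 e0_2] := hb e0 e0E.
case: (gcd_edge_sign gG qp e0G hd) => [[h1 h2]|[h1 _]]; last lia.
exact: (structured_sign e0 e st hR e0G eE).2.
Qed.

Definition ep_levels p (k : int) (E : {fset rat * rat}) : Prop :=
  forall e, e \in E -> (ep p e.1 = k \/ ep p e.2 = k) /\
    k - 1 <= ep p e.1 <= k + 1 /\ k - 1 <= ep p e.2 <= k + 1.

Lemma inRminus_level [G p] : is_gcd_graph G -> structured G -> inRminus G p ->
  exists2 k : int, k <= -1 & ep_levels p k (gE G).
Proof.
move=> gG st [hR hb]; have [k Hk] := st p hR.
exists k; last by move=> e eE; apply: structured_pair_bounds; apply: Hk.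
case: hR => pp [_ [e [eE hd]]]; have [e1 e2] := hb e eE.
have := structured_pair_bounds (Hk e eE).
case: (gcd_edge_sign gG pp eE hd); lia.
Qed.

Definition refine G (p : nat) (fp gp : int) (V W : {fset rat})
    (E : {fset rat * rat}) : GCDGraph R :=
  mkGCDGraph (gmu G) V W E (p |` gP G)
    (fun q => if q == p then fp else gf G q) (fun q => if q == p then gp else gg G q).

Record refinable G (p : nat) (fp gp : int) (V W : {fset rat})
    (E : {fset rat * rat}) : Prop := Refinable {
  refinable_prime : prime p;
  refinable_notin : p \notin gP G;
  refinable_f : fp <= 0;
  refinable_g : gp <= 0;
  refinable_V : V `<=` gV G;
  refinable_W : W `<=` gW G;
  refinable_E : forall e, e \in E -> [&& e \in gE G, e.1 \in V & e.2 \in W];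
  refinable_epV : forall v, v \in V -> ep p v <= fp;
  refinable_epW : forall w, w \in W -> ep p w <= gp;
  refinable_epE : forall e, e \in E ->
    Num.max (ep p e.1) (ep p e.2) = Num.max fp gp }.

Lemma refinable_sub [G p fp gp V W E V' W' E'] :
  refinable G p fp gp V W E -> V' `<=` V -> W' `<=` W ->
  (forall e, e \in E' -> [&& e \in E, e.1 \in V' & e.2 \in W']) ->
  refinable G p fp gp V' W' E'.
Proof.
case=> pp pP f0 g0 sV sW sE epV epW epE sV' sW' sE'; split => //.
- exact: fsubset_trans sV' sV.
- exact: fsubset_trans sW' sW.
- by move=> e /sE' /and3P[/sE /andP[-> _] -> ->].
- by move=> v /(fsubsetP sV'); apply: epV.
- by move=> w /(fsubsetP sW'); apply: epW.
- by move=> e /sE' /andP[/epE].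
Qed.

Lemma refinable_new_prime [G p fp gp V W E] :
  is_gcd_graph G -> refinable G p fp gp V W E ->
  [/\ forall v, v \in V -> (p ^ ipos fp %| rnum v)%N /\ (p ^ ineg fp %| rden v)%N,
      forall w, w \in W -> (p ^ ipos gp %| rnum w)%N /\ (p ^ ineg gp %| rden w)%N &
      forall e, e \in E ->
        logn p (gcdn (rnum e.1) (rnum e.2)) = minn (ipos fp) (ipos gp) /\
        logn p (gcdn (rden e.1) (rden e.2)) = minn (ineg fp) (ineg gp)].
Proof.
move=> gG [pp pP f0 g0 sV sW sE epV epW epE].
have vpos v : v \in V -> 0 < v by move=> /(fsubsetP sV) /(gcd_graph_V_gt0 gG).
have wpos w : w \in W -> 0 < w by move=> /(fsubsetP sW) /(gcd_graph_W_gt0 gG).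
split.
- by move=> v vV; apply: dvdn_pfactor_rnum_rden; [|apply: vpos|apply: epV|].
- by move=> w wW; apply: dvdn_pfactor_rnum_rden; [|apply: wpos|apply: epW|].
move=> e eE; have /and3P[_ e1 e2] := sE e eE.
have x1 := vpos _ e1; have x2 := wpos _ e2.
have [n1 d1] := ep_le0E pp x1 (le_trans (epV _ e1) f0).
have [n2 d2] := ep_le0E pp x2 (le_trans (epW _ e2) g0).
rewrite !logn_gcd ?rnum_gt0 ?rden_gt0 // n1 n2 !ipos_nonpos //.
split => //; have := epE e eE; have := ineg_nonpos f0; have := ineg_nonpos g0.
lia.
Qed.

Lemma refine_gcd_graph [G p fp gp V W E] : is_gcd_graph G ->
  refinable G p fp gp V W E -> is_gcd_graph (refine G p fp gp V W E).
Proof.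
move=> gG blk; have [hv hw he] := refinable_new_prime gG blk.
case: blk => pp pP _ _ sV sW sE _ _ _.
have [[mu0 _] [primeP divP]] := gG.
split; first split=> //=; first split.
- by move=> v /(fsubsetP sV) /(gcd_graph_V_gt0 gG).
- split; first by move=> w /(fsubsetP sW) /(gcd_graph_W_gt0 gG).
  by move=> e /sE /and3P[_ -> ->].
split=> [q|q] /=; rewrite in_fset1U => /orP[/eqP ->|qP].
- exact: pp.
- exact: primeP.
- by rewrite eqxx.
have -> : (q == p) = false by apply: contraNF pP => /eqP <-.
have [dV [dW dE]] := divP q qP; split; last split.
- by move=> v /(fsubsetP sV); apply: dV.
- by move=> w /(fsubsetP sW); apply: dW.
- by move=> e /sE /andP[/dE].
Qed.

Lemma refine_gcd_subgraph [G p fp gp V W E] :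
  refinable G p fp gp V W E -> gcd_subgraph (refine G p fp gp V W E) G.
Proof.
case=> _ pP _ _ sV sW sE _ _ _; do 4!split => //.
  by apply/fsubsetP => e /sE /andP[].
split; first exact: fsubsetU1.
by move=> q qP /=; have -> : (q == p) = false by apply: contraNF pP => /eqP <-.
Qed.

Lemma refine_numerator_exact [G p fp gp V W E] : is_gcd_graph G ->
  refinable G p fp gp V W E -> numerator_exact (refine G p fp gp V W E) G.
Proof.
move=> gG [pp pP f0 g0 sV sW _ epV epW _] q /=.
rewrite in_fset1U => /orP[/eqP -> _|->] //; rewrite eqxx.
split.
- move=> v vV; have v0 := gcd_graph_V_gt0 gG (fsubsetP sV v vV).
  by rewrite (ep_le0E pp v0 (le_trans (epV v vV) f0)).1 ipos_nonpos.
- move=> w wW; have w0 := gcd_graph_W_gt0 gG (fsubsetP sW w wW).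
  by rewrite (ep_le0E pp w0 (le_trans (epW w wW) g0)).1 ipos_nonpos.
Qed.

Lemma refine_new_primes G p fp gp V W E : p \notin gP G ->
  gP (refine G p fp gp V W E) `\` gP G = [fset p].
Proof.
move=> pP; apply/fsetP => q; rewrite !inE.
by case: eqP => [->|] //=; [rewrite pP | case: (_ \in _)].
Qed.

Lemma refine_primes_proper G p fp gp V W E : p \notin gP G ->
  gP G `<` gP (refine G p fp gp V W E).
Proof.
move=> pP; rewrite fproperE fsubsetU1 /=.
by apply/fsubsetPn; exists p; rewrite ?fset1U1.
Qed.

End GCDGraphs.

Section Weights.
Context {R : realType}.

Lemma big_fset_sepE (T : choiceType) (X : {fset T}) (P : pred T) (F : T -> R) :
  \sum_(x <- [fset x in X | P x]) F x = \sum_(x <- X) (if P x then F x else 0).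
Proof. by rewrite -big_fset_condE big_mkcond. Qed.

Lemma ler_sum_fset_sep [T : choiceType] [X : {fset T}] (P : pred T) [F : T -> R] :
  (forall x, x \in X -> 0 <= F x) ->
  \sum_(x <- [fset x in X | P x]) F x <= \sum_(x <- X) F x.
Proof.
move=> F0; rewrite big_fset_sepE big_seq [leRHS]big_seq.
by apply: ler_sum => x /F0; case: (P x).
Qed.

Lemma ler_sum_fset_sep2 [T : choiceType] [X : {fset T}] (P1 P2 : pred T) [F : T -> R] :
  (forall x, x \in X -> 0 <= F x) ->
  (forall x, x \in X -> ~~ (P1 x && P2 x)) ->
  \sum_(x <- [fset x in X | P1 x]) F x + \sum_(x <- [fset x in X | P2 x]) F x
    <= \sum_(x <- X) F x.
Proof.
move=> F0 D; rewrite !big_fset_sepE -big_split /= big_seq [leRHS]big_seq.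
apply: ler_sum => x xX; have := D x xX; have := F0 x xX.
by case: (P1 x); case: (P2 x) => //= ? ?; rewrite ?addr0 ?add0r.
Qed.

Lemma sum_fset_sep3 [T : choiceType] (X : {fset T}) (P1 P2 P3 : pred T) (F : T -> R) :
  (forall x, x \in X -> (P1 x + P2 x + P3 x = 1)%N) ->
  \sum_(x <- X) F x = \sum_(x <- [fset x in X | P1 x]) F x +
    \sum_(x <- [fset x in X | P2 x]) F x + \sum_(x <- [fset x in X | P3 x]) F x.
Proof.
move=> D; rewrite !big_fset_sepE -!big_split /= big_seq [RHS]big_seq.
apply: eq_bigr => x xX; have := D x xX.
by case: (P1 x); case: (P2 x); case: (P3 x) => //= _; rewrite ?addr0 ?add0r.
Qed.

Lemma sum_fset_gt0 [T : choiceType] [X : {fset T}] [F : T -> R] [x] :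
  (forall y, y \in X -> 0 <= F y) -> x \in X -> 0 < F x ->
  0 < \sum_(y <- X) F y.
Proof.
move=> F0 xX Fx; rewrite (big_fsetD1 _ xX) /= ltr_wpDr // big_seq sumr_ge0 // => y.
by rewrite in_fsetD1 => /andP[_ /F0].
Qed.

Lemma muS_gt0 [mu : R -> R] [S v] : (forall w, w \in S -> 0 < mu (ratr w)) ->
  v \in S -> 0 < muS mu S.
Proof. by move=> mu0 vS; apply: (sum_fset_gt0 _ vS (mu0 v vS)) => w /mu0 /ltW. Qed.

Lemma muS_ge0 [mu : R -> R] [S] : (forall w, w \in S -> 0 < mu (ratr w)) ->
  0 <= muS mu S.
Proof. by move=> mu0; rewrite /muS big_seq sumr_ge0 // => w /mu0 /ltW. Qed.

Lemma muE_gt0 [mu : R -> R] [E e] :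
  (forall f, f \in E -> 0 < mu (ratr f.1) * mu (ratr f.2)) -> e \in E -> 0 < muE mu E.
Proof. by move=> mu0 eE; apply: (sum_fset_gt0 _ eE (mu0 e eE)) => f /mu0 /ltW. Qed.

Lemma muE_ge0 [mu : R -> R] [E] :
  (forall f, f \in E -> 0 < mu (ratr f.1) * mu (ratr f.2)) -> 0 <= muE mu E.
Proof. by move=> mu0; rewrite /muE big_seq sumr_ge0 // => f /mu0 /ltW. Qed.

Lemma mu_theta_fset0 th mu V W : th != 0 -> mu_theta th mu V W fset0 = 0 :> R.
Proof. by move=> th0; rewrite /mu_theta /density eqxx powR0 // !mul0r. Qed.

Lemma mu_thetaE th mu V W E : E != fset0 ->
  mu_theta th mu V W E =
    powR (muE mu E / (muS mu V * muS mu W)) th * muS mu V * muS mu W :> R.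
Proof. by move=> E0; rewrite /mu_theta /density (negbTE E0). Qed.

Lemma mu_theta_gt0_neq0 [th : R] [mu V W E] : th != 0 -> 0 < mu_theta th mu V W E ->
  E != fset0 :> {fset rat * rat}.
Proof. by move=> th0; apply: contraTneq => ->; rewrite mu_theta_fset0 ?ltxx. Qed.

Lemma mu_theta_ge_of_density [th] [mu : R -> R] [V0 W0 E0 V W E c] :
  0 < th -> 0 <= c -> 0 < muS mu V0 -> 0 < muS mu W0 -> 0 < muE mu E0 ->
  0 < muS mu V -> 0 < muS mu W -> 0 < muE mu E ->
  c `^ th^-1 * (muS mu V / muS mu V0 * (muS mu W / muS mu W0)) `^ (1 - th^-1)
    <= muE mu E / muE mu E0 ->
  c * mu_theta th mu V0 W0 E0 <= mu_theta th mu V W E.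
Proof.
move=> th0 c0 V0pos W0pos E0pos Vpos Wpos Epos hx.
have nz (F : {fset rat * rat}) : 0 < muE mu F -> F != fset0.
  by apply: contraTneq => ->; rewrite /muE big_seq_fset0 ltxx.
rewrite !mu_thetaE ?nz //.
set r := muS mu V / muS mu V0 * (muS mu W / muS mu W0) in hx.
have r0 : 0 < r by rewrite /r !mulr_gt0 ?invr_gt0.
have := powR_density_transfer th0 c0 r0
  (divr_ge0 (ltW E0pos) (mulr_ge0 (ltW V0pos) (ltW W0pos)))
  (mulr_ge0 (ltW V0pos) (ltW W0pos)) hx.
have -> : muE mu E / muE mu E0 / r * (muE mu E0 / (muS mu V0 * muS mu W0)) =
    muE mu E / (muS mu V * muS mu W) by rewrite /r; field; rewrite !gt_eqF.
have -> : r * (muS mu V0 * muS mu W0) = muS mu V * muS mu W.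
  by rewrite /r; field; rewrite !gt_eqF.
by rewrite -!mulrA.
Qed.

Lemma seq_argmax [T : eqType] [s : seq T] (F : T -> R) [x0] : x0 \in s ->
  exists2 x, x \in s & forall y, y \in s -> F y <= F x.
Proof.
elim: s x0 => // a s IH x0 _; case: s IH => [|b s] IH.
  by exists a; rewrite ?mem_head // => y; rewrite inE => /eqP ->.
have [x xs Hx] := IH b (mem_head b s).
have [le|lt] := lerP (F a) (F x).
  exists x; first by rewrite inE xs orbT.
  by move=> y; rewrite inE => /predU1P[->|/Hx].
exists a; first exact: mem_head.
by move=> y; rewrite inE => /predU1P[->//|/Hx /le_trans]; apply; apply: ltW.
Qed.

Lemma exists_maximal_subgraph th (mu : R -> R) [V W E] :
  (forall e, e \in E -> (e.1 \in V) && (e.2 \in W)) ->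
  exists V' W' E', [/\ V' `<=` V, W' `<=` W,
    forall e, e \in E' -> [&& e \in E, e.1 \in V' & e.2 \in W'],
    mu_theta th mu V W E <= mu_theta th mu V' W' E' &
    forall V2 W2 E2, V2 `<=` V' -> W2 `<=` W' ->
      (forall e, e \in E2 -> [&& e \in E', e.1 \in V2 & e.2 \in W2]) ->
      mu_theta th mu V2 W2 E2 <= mu_theta th mu V' W' E'].
Proof.
move=> EVW.
pose sub (x : {fset rat} * {fset rat} * {fset rat * rat}) :=
  [&& x.1.1 `<=` V, x.1.2 `<=` W &
      all (fun e => [&& e \in E, e.1 \in x.1.1 & e.2 \in x.1.2]) x.2].
pose cands := [seq x <- [seq (ab, F) | ab <- [seq (A, B) | A <- fpowerset V,
                   B <- fpowerset W], F <- fpowerset E] | sub x].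
have candP V2 W2 E2 : V2 `<=` V -> W2 `<=` W ->
    (forall e, e \in E2 -> [&& e \in E, e.1 \in V2 & e.2 \in W2]) ->
    ((V2, W2), E2) \in cands.
  move=> sV sW sE; rewrite /cands (mem_filter sub) /sub /= sV sW; apply/andP; split.
    by apply/allP => e /sE.
  apply: allpairs_f; first by apply: allpairs_f; rewrite fpowersetE.
  by rewrite fpowersetE; apply/fsubsetP => e /sE /and3P[].
have VWE : ((V, W), E) \in cands.
  by apply: candP => // e eE; rewrite eE EVW.
have [[[V' W'] E'] + maxx] :=
  seq_argmax (fun x => mu_theta th mu x.1.1 x.1.2 x.2) VWE.
rewrite (mem_filter sub) => /andP[/and3P[/= sV' sW' /allP sE'] _].
exists V', W', E'; split => //; first exact: (maxx _ VWE).
move=> V2 W2 E2 sV2 sW2 sE2; apply: (maxx ((V2, W2), E2)); apply: candP.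
- exact: fsubset_trans sV'.
- exact: fsubset_trans sW'.
- by move=> e /sE2 /and3P[/sE' /and3P[-> _ _] -> ->].
Qed.

End Weights.

Section Refinements.
Context {R : realType}.
Implicit Types G : GCDGraph R.

Lemma gcd_graph_muV_gt0 [G] S : is_gcd_graph G -> S `<=` gV G ->
  forall v, v \in S -> 0 < gmu G (ratr v).
Proof.
move=> gG /fsubsetP sS v /sS /(gcd_graph_V_gt0 gG) v0.
by have [[mu0 _] _] := gG; apply: mu0; rewrite ltr0q.
Qed.

Lemma gcd_graph_muW_gt0 [G] S : is_gcd_graph G -> S `<=` gW G ->
  forall w, w \in S -> 0 < gmu G (ratr w).
Proof.
move=> gG /fsubsetP sS w /sS /(gcd_graph_W_gt0 gG) w0.
by have [[mu0 _] _] := gG; apply: mu0; rewrite ltr0q.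
Qed.

Lemma gcd_graph_muE_gt0 [G] S : is_gcd_graph G -> S `<=` gE G ->
  forall e, e \in S -> 0 < gmu G (ratr e.1) * gmu G (ratr e.2).
Proof.
move=> gG /fsubsetP sS e /sS eE; have /andP[e1 e2] := gcd_graph_edge gG eE.
exact: mulr_gt0 (gcd_graph_muV_gt0 _ gG (fsubset_refl _) _ e1)
  (gcd_graph_muW_gt0 _ gG (fsubset_refl _) _ e2).
Qed.

Lemma gcd_graph_masses_gt0 [G] : is_gcd_graph G -> nontrivial G ->
  [/\ 0 < muS (gmu G) (gV G), 0 < muS (gmu G) (gW G) & 0 < muE (gmu G) (gE G)].
Proof.
move=> gG /fset0Pn[e eE]; have /andP[eV eW] := gcd_graph_edge gG eE.
split; first exact: muS_gt0 (gcd_graph_muV_gt0 _ gG (fsubset_refl _)) eV.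
  exact: muS_gt0 (gcd_graph_muW_gt0 _ gG (fsubset_refl _)) eW.
exact: muE_gt0 (gcd_graph_muE_gt0 _ gG (fsubset_refl _)) eE.
Qed.

Definition refinement_loss (tau : R) (p : nat) (fp gp : int) : R :=
  (1 - (((fp == gp) && (fp < 0))%:R / p%:R)) ^+ 2 *
  (1 - 1 / powR (p%:R) (1 + tau / 4)).

Lemma refinement_loss_diag tau p (k : int) : k < 0 ->
  refinement_loss tau p k k =
    (1 - p%:R^-1) ^+ 2 * (1 - 1 / powR p%:R (1 + tau / 4)) * p%:R ^+ `|k - k|%N.
Proof.
by move=> k0; rewrite /refinement_loss eqxx k0 /= subrr absz0 expr0 mulr1 [1 / p%:R]div1r.
Qed.

Lemma refinement_loss_offdiag tau p (fp gp : int) : (0 < p)%N ->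
  `|fp - gp|%N = 1%N -> refinement_loss tau p fp gp =
    (1 - 1 / powR p%:R (1 + tau / 4)) * p%:R^-1 * p%:R ^+ `|fp - gp|%N.
Proof.
move=> p0 d1; rewrite /refinement_loss d1 expr1 mulfVK ?pnatr_eq0 -?lt0n //.
have -> : (fp == gp) = false by apply/eqP => e; rewrite e subrr in d1.
by rewrite mul0r subr0 expr1n mul1r.
Qed.

Lemma refinement_parameters [tau : R] [p : nat] : 0 < tau -> tau < 1 -> prime p ->
  288 * 288 <= p%:R :> R ->
  [/\ 3^-1 < (2 + tau)^-1, (2 + tau)^-1 < 2^-1, 0 <= (p%:R : R)^-1 <= 2^-1,
      0 <= 1 / (p%:R : R) `^ (1 + tau / 4) <= 1 &
      288 * (p%:R : R)^-1 ^+ 2 <= 1 / p%:R `^ (1 + tau / 4)].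
Proof.
move=> tau0 tau1 pp pbig; have [tq q01] := inv_powR_bounds tau0 tau1 pbig.
have p2 : 2 <= p%:R :> R by rewrite ler_nat prime_gt1.
split=> //; try by rewrite ltf_pV2 ?posrE; lra.
by rewrite invr_ge0 ler0n lef_pV2 ?posrE //; lra.
Qed.

Definition dense_refinement tau G p fp gp V W E : Prop :=
  [/\ refinable G p fp gp V W E, 0 < mu_theta (2 + tau) (gmu G) V W E &
      gmu_theta (2 + tau) G * refinement_loss tau p fp gp
        <= mu_theta (2 + tau) (gmu G) V W E * p%:R ^+ `|fp - gp|%N].

Lemma dense_refinement_of_density [tau G p fp gp V W E c] :
  0 < tau -> is_gcd_graph G -> nontrivial G -> refinable G p fp gp V W E -> 0 <= c ->
  refinement_loss tau p fp gp = c * p%:R ^+ `|fp - gp|%N -> 0 < muE (gmu G) E ->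
  c `^ (2 + tau)^-1 * (muS (gmu G) V / muS (gmu G) (gV G) *
    (muS (gmu G) W / muS (gmu G) (gW G))) `^ (1 - (2 + tau)^-1)
    <= muE (gmu G) E / muE (gmu G) (gE G) ->
  dense_refinement tau G p fp gp V W E.
Proof.
move=> tau0 gG nt blk c0 loss E0 hx.
have [SV0 SW0 ET0] := gcd_graph_masses_gt0 gG nt.
have [_ _ _ _ sV sW sE _ _ _] := blk.
have [e eE] : exists e, e \in E.
  by apply/fset0Pn; apply: contraTneq E0 => ->; rewrite /muE big_seq_fset0 ltxx.
have /and3P[_ e1 e2] := sE e eE.
have V0 := muS_gt0 (gcd_graph_muV_gt0 _ gG sV) e1.
have W0 := muS_gt0 (gcd_graph_muW_gt0 _ gG sW) e2.
have th0 : 0 < 2 + tau by lra.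
have dense := mu_theta_ge_of_density th0 c0 SV0 SW0 ET0 V0 W0 E0 hx.
split=> //.
  rewrite mu_thetaE; last by apply/fset0Pn; exists e.
  by rewrite !mulr_gt0 // powR_gt0 // divr_gt0 ?mulr_gt0.
rewrite loss mulrA; apply: ler_wpM2r; first by rewrite exprn_ge0.
by rewrite mulrC.
Qed.

Definition ep_le_vertices p k (S : {fset rat}) := [fset v in S | ep p v <= k].
Definition ep_eq_vertices p k (S : {fset rat}) := [fset v in S | ep p v == k].
Definition ep_le_edges p k (E : {fset rat * rat}) :=
  [fset e in E | (ep p e.1 <= k) && (ep p e.2 <= k)].
Definition ep_eq_left_edges p k (E : {fset rat * rat}) := [fset e in E | ep p e.1 == k].
Definition ep_eq_right_edges p k (E : {fset rat * rat}) := [fset e in E | ep p e.2 == k].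

Lemma refinable_ep_le [G p k] : is_gcd_graph G -> prime p -> p \notin gP G ->
  k <= -1 -> ep_levels p k (gE G) ->
  refinable G p k k (ep_le_vertices p k (gV G))
    (ep_le_vertices p k (gW G)) (ep_le_edges p k (gE G)).
Proof.
move=> gG pp pP k_neg levels; split=> //; rewrite ?fset_sub //; try lia.
- move=> e; rewrite !inE => /andP[eE /andP[-> ->]].
  by have /andP[-> ->] := gcd_graph_edge gG eE; rewrite eE.
- by move=> v; rewrite !inE => /andP[].
- by move=> w; rewrite !inE => /andP[].
- by move=> [v w]; rewrite !inE => /andP[/levels]; lia.
Qed.

Lemma refinable_ep_eq_left [G p k] : is_gcd_graph G -> prime p -> p \notin gP G ->
  k <= -1 -> ep_levels p k (gE G) ->
  refinable G p (k + 1) k (ep_eq_vertices p (k + 1) (gV G))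
    (ep_eq_vertices p k (gW G)) (ep_eq_left_edges p (k + 1) (gE G)).
Proof.
move=> gG pp pP k_neg levels; split=> //; rewrite ?fset_sub //; try lia.
- move=> [v w]; rewrite !inE /= => /andP[eE e1].
  have /andP[/= -> ->] := gcd_graph_edge gG eE; rewrite eE e1 /=.
  by have /= := levels _ eE; lia.
- by move=> v; rewrite !inE => /andP[_ /eqP ->].
- by move=> w; rewrite !inE => /andP[_ /eqP ->].
- by move=> [v w]; rewrite !inE => /andP[/levels]; lia.
Qed.

Lemma refinable_ep_eq_right [G p k] : is_gcd_graph G -> prime p -> p \notin gP G ->
  k <= -1 -> ep_levels p k (gE G) ->
  refinable G p k (k + 1) (ep_eq_vertices p k (gV G))
    (ep_eq_vertices p (k + 1) (gW G)) (ep_eq_right_edges p (k + 1) (gE G)).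
Proof.
move=> gG pp pP k_neg levels; split=> //; rewrite ?fset_sub //; try lia.
- move=> [v w]; rewrite !inE /= => /andP[eE e2].
  have /andP[/= -> ->] := gcd_graph_edge gG eE; rewrite eE e2 andbT /=.
  by have /= := levels _ eE; lia.
- by move=> v; rewrite !inE => /andP[_ /eqP ->].
- by move=> w; rewrite !inE => /andP[_ /eqP ->].
- by move=> [v w]; rewrite !inE => /andP[/levels]; lia.
Qed.

Lemma muS_ep_split [mu : R -> R] [S] p k : (forall v, v \in S -> 0 < mu (ratr v)) ->
  muS mu (ep_le_vertices p k S) + muS mu (ep_eq_vertices p (k + 1) S) <= muS mu S.
Proof.
move=> mu0; apply: ler_sum_fset_sep2 => [v /mu0 /ltW //|v _].
by apply/negP => /andP[h /eqP e]; move: h; rewrite e; lia.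
Qed.

Lemma muS_ep_eq [mu : R -> R] [S] p k : (forall v, v \in S -> 0 < mu (ratr v)) ->
  muS mu (ep_eq_vertices p k S) <= muS mu S.
Proof. by move=> mu0; apply: ler_sum_fset_sep => v /mu0 /ltW. Qed.

Lemma muE_ep_partition (mu : R -> R) [G p k] : ep_levels p k (gE G) ->
  muE mu (gE G) = muE mu (ep_le_edges p k (gE G)) +
    muE mu (ep_eq_left_edges p (k + 1) (gE G)) +
    muE mu (ep_eq_right_edges p (k + 1) (gE G)).
Proof.
move=> levels; apply: sum_fset_sep3 => -[v w] /levels /= lv.
by case: (ep p v <= k) / boolP; case: (ep p w <= k) / boolP;
  case: (ep p v =P k + 1); case: (ep p w =P k + 1) => //=; lia.
Qed.

Lemma exists_dense_refinement [tau G p] : 0 < tau -> tau < 1 ->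
  is_gcd_graph G -> nontrivial G -> structured G -> inRminus G p ->
  288 * 288 <= p%:R :> R -> exists fp gp V W E, dense_refinement tau G p fp gp V W E.
Proof.
move=> tau0 tau1 gG nt st hp pbig.
have [k k_neg levels] := inRminus_level gG st hp.
have [[pp [pP _]] _] := hp.
have [SV0 SW0 ET0] := gcd_graph_masses_gt0 gG nt.
have [s_gt s_lt t01 q01 tq] := refinement_parameters tau0 tau1 pp pbig.
have /andP[q0 q1] := q01.
set VA := ep_le_vertices p k (gV G); set WA := ep_le_vertices p k (gW G).
set VB := ep_eq_vertices p (k + 1) (gV G); set WB := ep_eq_vertices p k (gW G).
set VC := ep_eq_vertices p k (gV G); set WC := ep_eq_vertices p (k + 1) (gW G).
set EA := ep_le_edges p k (gE G); set EB := ep_eq_left_edges p (k + 1) (gE G).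
set EC := ep_eq_right_edges p (k + 1) (gE G).
have [muV muW] := (gcd_graph_muV_gt0 _ gG (fsubset_refl _),
                   gcd_graph_muW_gt0 _ gG (fsubset_refl _)).
case: (exists_dense_block_masses s_gt s_lt t01 q01 tq SV0 SW0
  (muS_ge0 (gcd_graph_muV_gt0 VA gG (fset_sub _ _)))
  (muS_ge0 (gcd_graph_muV_gt0 VB gG (fset_sub _ _)))
  (muS_ge0 (gcd_graph_muV_gt0 VC gG (fset_sub _ _)))
  (muS_ge0 (gcd_graph_muW_gt0 WA gG (fset_sub _ _)))
  (muS_ge0 (gcd_graph_muW_gt0 WB gG (fset_sub _ _)))
  (muS_ge0 (gcd_graph_muW_gt0 WC gG (fset_sub _ _)))
  (muS_ep_split p k muV) (muS_ep_eq p k muV)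
  (muS_ep_split p k muW) (muS_ep_eq p k muW)
  (muE_ge0 (gcd_graph_muE_gt0 EA gG (fset_sub _ _)))
  (muE_ge0 (gcd_graph_muE_gt0 EB gG (fset_sub _ _)))
  (muE_ge0 (gcd_graph_muE_gt0 EC gG (fset_sub _ _))));
  rewrite -(muE_ep_partition _ levels) // => -[E0 hx].
- exists k, k, VA, WA, EA.
  have blk := refinable_ep_le gG pp pP k_neg levels.
  apply: dense_refinement_of_density tau0 gG nt blk _ _ E0 hx.
  + by rewrite mulr_ge0 ?sqr_ge0 ?subr_ge0.
  + exact: refinement_loss_diag.
- exists (k + 1), k, VB, WB, EB.
  have blk := refinable_ep_eq_left gG pp pP k_neg levels.
  apply: dense_refinement_of_density tau0 gG nt blk _ _ E0 hx.
  + by rewrite mulr_ge0 ?subr_ge0 ?invr_ge0.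
  + by apply: refinement_loss_offdiag; rewrite ?prime_gt0 // addrAC subrr.
- exists k, (k + 1), VC, WC, EC.
  have blk := refinable_ep_eq_right gG pp pP k_neg levels.
  apply: dense_refinement_of_density tau0 gG nt blk _ _ E0 hx.
  + by rewrite mulr_ge0 ?subr_ge0 ?invr_ge0.
  + by apply: refinement_loss_offdiag; rewrite ?prime_gt0 // opprD addrA subrr.
Qed.

Lemma quality_refine_ge (th : R) [G p fp gp V W E c] : p \notin gP G ->
  gmu_theta th G * c <= mu_theta th (gmu G) V W E * p%:R ^+ `|fp - gp|%N ->
  quality th G * c <= quality th (refine G p fp gp V W E).
Proof.
move=> pP dense; rewrite /quality /gmu_theta big_fsetU1 //= eqxx.
set P := \prod_(q <- gP G) _; set P' := \prod_(q <- gP G) _.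
have -> : P' = P.
  rewrite /P /P' !big_seq; apply: eq_bigr => q qP.
  by have -> : (q == p) = false by apply: contraNF pP => /eqP <-.
rewrite mulrAC mulrA; apply: ler_wpM2r => //.
by rewrite prodr_ge0 // => q _; rewrite exprn_ge0.
Qed.

End Refinements.

Lemma C6_ge (R : realType) (tau M : R) : 0 < tau -> tau < 1 -> 2 <= M ->
  288 * 288 <= C6 tau M.
Proof.
move=> t0 t1 M2; rewrite /C6 le_max; apply/orP; left.
have C1g : 1 <= C1 tau.
  rewrite /C1 ler_pdivlMr // mul1r; apply: le_trans (ltW t1) _.
  by rewrite -natrX ler1n.
have C2g : 1 <= C2 tau M by rewrite /C2; have := exprn_ege1 3 C1g; nra.
have C22 := exprn_ege1 2 C2g.
have h : (288 * 288 : R) <= 10 ^+ 10 by rewrite -!natrM -natrX ler_nat.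
rewrite /C4; have : 4 <= M ^+ 2 by nra.
nra.
Qed.

Theorem proposition7p16 (R : realType) (tau M : R) (G : GCDGraph R) :
  0 < tau -> tau < 1 / 100 -> 2 <= M ->
  is_gcd_graph G -> nontrivial G -> structured G ->
  (forall p, inR G p -> C6 tau M < p%:R) ->
  (exists p, inRminus G p) ->
  exists G' : GCDGraph R,
    [/\ is_gcd_graph G', gcd_subgraph G' G & numerator_exact G' G] /\
    (* (a) *)
    (nontrivial G' /\ maximal (2 + tau) G') /\
    (* (b) *)
    [/\ gP G `<` gP G',
        (forall p, p \in gP G' -> p \in gP G \/ inRminus G p),
        (forall p, inRminus G' p -> inRminus G p) /\
          (exists p, inRminus G p /\ ~ inRminus G' p)
      & (forall p, inRplus G' p -> inRplus G p)] /\
    (* (c) *)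
    (forall p, p \in gP G' `\` gP G -> gf G' p <= 0 /\ gg G' p <= 0) /\
    (* (d) *)
    quality (2 + tau) G *
      \prod_(p <- gP G' `\` gP G)
        ((1 - (((gf G' p == gg G' p) && (gf G' p < 0))%:R / p%:R)) ^+ 2 *
         (1 - 1 / powR (p%:R) (1 + tau / 4)))
    <= quality (2 + tau) G'.
Proof.
move=> tau0 tau_small M2 gG nt st hC [p hp].
have tau1 : tau < 1 by lra.
have pbig : 288 * 288 <= p%:R :> R by apply: le_trans (ltW (hC p hp.1)); apply: C6_ge.
have [fp [gp [V [W [E [blk mpos dense]]]]]] :=
  exists_dense_refinement tau0 tau1 gG nt st hp pbig.
have [_ pP f0 g0 _ _ sE _ _ _] := blk.
have EVW e : e \in E -> (e.1 \in V) && (e.2 \in W) by move=> /sE /and3P[_ -> ->].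
have [V' [W' [E' [sV' sW' sE' grow maxl]]]] :=
  exists_maximal_subgraph (2 + tau) (gmu G) EVW.
have blk' := refinable_sub blk sV' sW' sE'.
have sub := refine_gcd_subgraph blk'.
exists (refine G p fp gp V' W' E'); split.
  by split=> //; [apply: refine_gcd_graph | apply: refine_numerator_exact].
split; first split=> //.
  by apply: (mu_theta_gt0_neq0 (_ : 2 + tau != 0)); [lra | apply: lt_le_trans grow].
split; first split.
- exact: refine_primes_proper.
- by move=> q /=; rewrite in_fset1U => /orP[/eqP ->|]; [right | left].
- split; first by move=> q; apply: inRminus_subgraph.
  by exists p; split=> // -[[_ [/=]]]; rewrite fset1U1.
- by move=> q; apply: inRplus_subgraph.
rewrite refine_new_primes //; split=> [q|].
  by rewrite inE => /eqP -> /=; rewrite eqxx.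
rewrite big_seq_fset1 /= eqxx; apply: quality_refine_ge => //.
by apply: le_trans dense _; rewrite ler_wpM2r ?exprn_ge0.
Qed.
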